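(* Let $p\in[1,\infty)$, let $X_1,X_2$ be Polish spaces, let $c:X_1\times X_2\to[0,\infty)$ be continuous, let $\mu_i\in\mathcal P_p(X_i)$, let $q>1$, and let $\varepsilon_k>0$ with $\varepsilon_k\to0$. Define $F_k,F:\mathcal P_p(X_1\times X_2)\to\mathbb R\cup\{\infty\}$ by $F_k(\pi)=\int c\,d\pi+\varepsilon_k D_q(\pi,\mu_1\otimes\mu_2)$ and $F(\pi)=\int c\,d\pi$ if $\pi\in\Pi(\mu_1,\mu_2)$, and $F_k(\pi)=F(\pi)=+\infty$ otherwise. Then for any sequence $(\pi_k)_{k\in\mathbb N}\subset\mathcal P_p(X_1\times X_2)$ with $\pi_k\to\pi$ narrowly, $$F(\pi)\le\liminf_{k\to\infty}F_k(\pi_k).$$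
   Context: $\mathcal P_p(X)$ is the set of probability measures with finite $p$-th moment and $\Pi(\mu_1,\mu_2)$ the set of couplings. The Tsallis relative entropy is $D_q(\mu,\nu)=\frac{1}{q-1}\int\big[(\frac{d\mu}{d\nu})^q-\frac{d\mu}{d\nu}\big]\,d\nu$ if $\mu\ll\nu$ and $q>1$, $+\infty$ otherwise. *)

From HB Require Import structures.
From mathcomp Require Import all_boot all_order all_algebra.
From mathcomp Require Import all_classical all_reals all_analysis.

Set Implicit Arguments.
Unset Strict Implicit.
Unset Printing Implicit Defensive.

Import Order.TTheory GRing.Theory Num.Theory.
Import numFieldNormedType.Exports.

Local Open Scope classical_set_scope.
Local Open Scope ring_scope.

Notation borelT X := (g_sigma_algebraType (@open X)).

Definition separable_space (X : topologicalType) : Prop :=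
  exists D : set X, countable D /\ dense D.

(* A Polish (metric) space: a complete metric space (a complete pseudometric
   space which is Hausdorff, i.e. a genuine metric space) that is separable. *)
Definition polish (R : realType) (X : completePseudoMetricType R) : Prop :=
  hausdorff_space X /\ separable_space X.

Section Defs.
Context {R : realType}.
Local Open Scope ereal_scope.

Definition finite_moment (p : R) (X : pseudoPMetricType R)
    (mu : probability (borelT X) R) : Prop :=
  exists x0 : X, \int[mu]_x (edist (x0, (x : X))) `^ p < +oo.

Definition finite_moment2 (p : R) (X1 X2 : pseudoPMetricType R)
    (pi : probability (borelT X1 * borelT X2)%type R) : Prop :=
  exists x0 : (X1 * X2)%type, \int[pi]_x (edist (x0, (x : (X1 * X2)%type))) `^ p < +oo.

Definition coupling (X1 X2 : ptopologicalType)
    (mu1 : probability (borelT X1) R) (mu2 : probability (borelT X2) R)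
    (pi : probability (borelT X1 * borelT X2)%type R) : Prop :=
  (forall A : set (borelT X1), measurable A -> pi (A `*` setT) = mu1 A) /\
  (forall B : set (borelT X2), measurable B -> pi (setT `*` B) = mu2 B).

Definition is_density {d} (T : measurableType d) (mu nu : set T -> \bar R)
    (f : T -> R) : Prop :=
  measurable_fun setT f /\ (forall x, (0 <= f x)%R) /\
  forall A, measurable A -> mu A = \int[nu]_(x in A) (f x)%:E.

(* Densities are unique nu-a.e., so the infimum below is over a set of
   (at most) one value; it is +oo (inf of the empty set) when no density
   exists, i.e. when mu is not absolutely continuous w.r.t. nu. *)
Definition tsallis {d} (T : measurableType d) (q : R)
    (mu nu : set T -> \bar R) : \bar R :=
  ereal_inf [set ((q - 1)^-1)%:E * \int[nu]_x (f x `^ q - f x)%:E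
            | f in is_density mu nu].

Definition F_eps (X1 X2 : ptopologicalType) (q eps : R)
    (c : (X1 * X2)%type -> R)
    (mu1 : probability (borelT X1) R) (mu2 : probability (borelT X2) R)
    (pi : probability (borelT X1 * borelT X2)%type R) : \bar R :=
  if pselect (coupling mu1 mu2 pi) then
    \int[pi]_x (c x)%:E + eps%:E * tsallis q pi (mu1 \x mu2)
  else +oo.

Definition F_lim (X1 X2 : ptopologicalType) (c : (X1 * X2)%type -> R)
    (mu1 : probability (borelT X1) R) (mu2 : probability (borelT X2) R)
    (pi : probability (borelT X1 * borelT X2)%type R) : \bar R :=
  if pselect (coupling mu1 mu2 pi) then \int[pi]_x (c x)%:E else +oo.

Definition narrow_cvg (X1 X2 : ptopologicalType)
    (pik : nat -> probability (borelT X1 * borelT X2)%type R)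
    (pi : probability (borelT X1 * borelT X2)%type R) : Prop :=
  forall f : (X1 * X2)%type -> R, continuous f -> (exists M : R, forall x, (`|f x| <= M)%R) ->
    (fun k => \int[pik k]_x (f x)%:E) @ \oo --> \int[pi]_x (f x)%:E.

End Defs.

(* Since x^q - x >= -1 for x >= 0, the Tsallis term is at least -1/(q-1), so
   F_k(pi_k) >= \int c dpi_k - eps_k/(q-1) when pi_k is a coupling, and
   F_k(pi_k) = +oo otherwise.  Couplings are closed under narrow limits: a
   finite Borel measure on a metric space is determined by the integrals of
   continuous [0,1]-valued functions (Urysohn functions approximate the
   indicators of open sets), so the marginal constraints pass to the limit.
   Hence if pi is not a coupling, F_k(pi_k) = +oo for all large k.  If pi is a
   coupling, the truncated costs min(c, M) are bounded and continuous, so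
   \int min(c, M) dpi = lim_k \int min(c, M) dpi_k <= liminf_k F_k(pi_k), and
   monotone convergence in M concludes. *)

From HB Require Import structures.
From mathcomp Require Import all_boot all_order all_algebra.
From mathcomp Require Import all_classical all_reals all_analysis.
From mathcomp Require Import lra measurable_realfun.
Import Order.TTheory GRing.Theory Num.Theory.
Import numFieldNormedType.Exports.
Local Open Scope classical_set_scope.
Local Open Scope ring_scope.

Lemma open_preimage_measurable_fun {R : realType} {d} {T : measurableType d}
    (f : T -> R) :
  (forall U : set R, open U -> measurable (f @^-1` U)) -> measurable_fun setT f.
Proof.
move=> fU; apply: (measurability _ (RGenOpens.measurableE R)).
by move=> _ [_ [a [b ->]] <-]; rewrite setTI; exact/fU/interval_open.
Qed.

Lemma open_borel_measurable {X : ptopologicalType} {U : set X} : open U ->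
  measurable (U : set (borelT X)).
Proof. exact: sub_sigma_algebra. Qed.

Lemma continuous_borel_measurable {R : realType} {X : ptopologicalType}
    {f : X -> R} : continuous f -> measurable_fun setT (f : borelT X -> R).
Proof.
move=> /continuousP cf; apply: open_preimage_measurable_fun => U /cf.
exact: open_borel_measurable.
Qed.

Lemma dense_ball_around {R : realType} {X : pseudoPMetricType R} {D : set X}
    {r : R} : dense D -> 0 < r ->
  forall x, exists2 d, D d & (ball d r)° x /\ ball d r `<=` ball x (2 * r).
Proof.
move=> dD r0 x; have r20 : 0 < r / 2 by rewrite divr_gt0.
have [d [/interior_subset xd Dd]] := dD _ (ex_intro _ x (nbhsx_ballx x _ r20))
  (@open_interior _ (ball x (r / 2))).
exists d => //; split.
- apply/nbhs_ballP; exists (r / 2) => // y xy.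
  by rewrite [r]splitr; exact: ball_triangle (ball_sym xd) xy.
- by move=> y dy; apply: le_ball (ball_triangle xd dy); lra.
Qed.

Section dense_boxes.
Context {R : realType} {X1 X2 : pseudoPMetricType R}.
Context {D1 : set X1} {D2 : set X2}.
Hypotheses (dD1 : dense D1) (dD2 : dense D2).

Let box (i : X1 * X2 * nat) : set (X1 * X2) :=
  (ball i.1.1 i.2.+1%:R^-1)° `*` (ball i.1.2 i.2.+1%:R^-1)°.

Let centers := D1 `*` D2 `*` [set: nat].

Lemma open_bigcup_dense_boxes {O : set (X1 * X2)} : open O ->
  O = \bigcup_(i in [set i | centers i /\ box i `<=` O]) box i.
Proof.
move=> oO; apply/seteqP; split => [z Oz|z [i [_ iO] zi]]; last exact: iO.
rewrite openE in oO; have /nbhs_ballP[e e0 zeO] := oO z Oz.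
pose n := Num.truncn (2 / e); pose r : R := n.+1%:R^-1.
have r0 : 0 < r by rewrite invr_gt0.
have re : 2 * r <= e.
  suff : r <= e / 2 by lra.
  rewrite /r -[e / 2]invf_div lef_pV2 ?posrE ?divr_gt0 //.
  exact/ltW/truncnS_gt.
have [d1 Dd1 [zd1 d1z]] := dense_ball_around dD1 r0 z.1.
have [d2 Dd2 [zd2 d2z]] := dense_ball_around dD2 r0 z.2.
exists (d1, d2, n) => //; split => // -[y1 y2] /= [y1d y2d].
apply: zeO; split; apply: (le_ball re).
- by apply: d1z; exact: interior_subset.
- by apply: d2z; exact: interior_subset.
Qed.

End dense_boxes.

Section separable_product_measurability.
Context {R : realType} {X1 X2 : pseudoPMetricType R}.
Hypotheses (sX1 : separable_space X1) (sX2 : separable_space X2).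

Lemma open_prod_measurable (O : set (X1 * X2)) : open O ->
  measurable (O : set (borelT X1 * borelT X2)%type).
Proof.
have [[D1 [cD1 dD1]] [D2 [cD2 dD2]]] := (sX1, sX2).
move=> oO; rewrite (open_bigcup_dense_boxes dD1 dD2 oO) bigcup_set_type.
apply: countable_bigcupT_measurable => [|i].
  rewrite (eq_countable (card_setT _)).
  apply: sub_countable
    (countableX (countableX cD1 cD2) (countableP [set: nat])).
  by apply: subset_card_le => i [].
by apply: measurableX; apply: open_borel_measurable; exact: open_interior.
Qed.

Lemma continuous_prod_measurable {f : X1 * X2 -> R} : continuous f ->
  measurable_fun setT (f : (borelT X1 * borelT X2)%type -> R).
Proof.
move=> /continuousP cf; apply: open_preimage_measurable_fun => U /cf.
exact: open_prod_measurable.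
Qed.

End separable_product_measurability.

Section urysohn_approximation.
Context {R : realType} {X : pseudoPMetricType R} (U : set X).

Definition urysohn_approx (n : nat) : X -> R :=
  Urysohn (~` U) [set x | ball x n.+1%:R^-1 `<=` U].

Lemma urysohn_approx_continuous n : continuous (urysohn_approx n).
Proof. exact: Urysohn_continuous. Qed.

Lemma urysohn_approx_01 n x : 0 <= urysohn_approx n x <= 1.
Proof.
by have := Urysohn_range (imageT (urysohn_approx n) x); rewrite /= in_itv.
Qed.

Let urysohn_approx_separator n :
  uniform_separator (~` U) [set x | ball x n.+1%:R^-1 `<=` U].
Proof.
apply: uniform_separatorW; exists [set xy : X * X | ball xy.1 n.+1%:R^-1 xy.2].
  by apply: (entourage_ball _ (PosNum _)); rewrite invr_gt0.
apply/seteqP; split => // -[x y] [[/= nUx Uy] xy].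
by apply: nUx; apply: Uy; exact: ball_sym.
Qed.

Lemma urysohn_approx_cvg x : open U ->
  (fun n => urysohn_approx n x) @ \oo --> (\1_U x : R).
Proof.
move=> oU; have [Ux|nUx] := pselect (U x); last first.
  rewrite indicE (memNset nUx); apply: cvg_near_cst; apply: nearW => n.
  by apply: Urysohn_sub0 (urysohn_approx_separator n) _ _; exists x.
rewrite indicE mem_set //; apply: cvg_near_cst.
rewrite openE in oU; have /nbhs_ballP[e e0 xeU] := oU x Ux.
near=> n; apply: Urysohn_sub1 (urysohn_approx_separator n) _ _; exists x => //.
apply: subset_trans xeU; apply: le_ball.
rewrite invf_ple ?posrE //; apply/ltW/(lt_le_trans (truncnS_gt _)).
by rewrite ler_nat ltnS; near: n; exact: nbhs_infty_ge.
Unshelve. all: by end_near.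
Qed.

Lemma integral_urysohn_approx_cvg {P : {measure set (borelT X) -> \bar R}} :
  (P setT < +oo)%E -> open U ->
  ((fun n => \int[P]_x (urysohn_approx n x)%:E) @ \oo --> P U)%E.
Proof.
move=> Pfin oU; have mU := open_borel_measurable oU.
rewrite -[U in P U]setIT -integral_indic //.
apply: (@dominated_cvg _ _ _ P setT _ _ _ (cst 1%:E)) => //.
- move=> n; apply/measurable_EFinP.
  apply: continuous_borel_measurable; exact: urysohn_approx_continuous.
- by move=> x _; apply: cvg_EFin; [exact: nearW | exact: urysohn_approx_cvg].
- apply/integrableP; split => //.
  by under eq_integral do rewrite abse1; rewrite integral_cst // mul1e.
- move=> n x _; rewrite lee_fin ger0_norm.
  all: by have /andP[] := urysohn_approx_01 n x.
Qed.

End urysohn_approximation.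

Lemma finite_measure_unique_continuous {R : realType} {X : pseudoPMetricType R}
    (P Q : {measure set (borelT X) -> \bar R}) : (P setT < +oo)%E ->
  (forall f : X -> R, continuous f -> (forall x, 0 <= f x <= 1) ->
     (\int[P]_x (f x)%:E = \int[Q]_x (f x)%:E)%E) ->
  forall A, measurable A -> P A = Q A.
Proof.
move=> Pfin PQ; have Qfin : (Q setT < +oo)%E.
  have PQ1 : (\int[P]_x 1%:E = \int[Q]_x 1%:E)%E.
    by apply: PQ => x; [exact: cvg_cst | rewrite ler01 lexx].
  by move: PQ1; rewrite !integral_cst // !mul1e => <-.
apply: (@measure_unique _ R (borelT X) (@open X) (fun=> setT)) => //.
- by move=> ? ? ? ?; exact: openI.
- by move=> _; exact: openT.
- by apply/seteqP; split => // x _; exists 0%N.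
- move=> U oU; have := integral_urysohn_approx_cvg U Qfin oU.
  have <- : (fun n => \int[P]_x (urysohn_approx U n x)%:E)%E =
            (fun n => \int[Q]_x (urysohn_approx U n x)%:E)%E.
    apply/funext => n; apply: PQ; first exact: urysohn_approx_continuous.
    exact: urysohn_approx_01.
  exact: cvg_unique _ (integral_urysohn_approx_cvg U Pfin oU).
Qed.

Lemma cvg_frequently_eq {T : topologicalType} {u : nat -> T} {l c : T} :
  hausdorff_space T -> u @ \oo --> l ->
  (forall N, exists2 k, (N <= k)%N & u k = c) -> l = c.
Proof.
move=> sep ul freq.
pose phi N := s2val (cid2 (freq N)).
have phioo : phi @ \oo --> \oo.
  apply/cvgnyPge => M; near=> N; apply: leq_trans (s2valP (cid2 (freq N))).
  by near: N; exact: nbhs_infty_ge.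
have uphil : (u \o phi) @ \oo --> l := cvg_comp _ _ phioo ul.
apply: (cvg_unique sep uphil).
by apply: cvg_near_cst; apply: nearW => N /=; exact: (s2valP' (cid2 (freq N))).
Unshelve. all: by end_near.
Qed.

Section narrow_limit_image.
Context {R : realType} {X1 X2 Y : pseudoPMetricType R}.
Variable phi : {mfun (borelT X1 * borelT X2)%type >-> borelT Y}.
Hypothesis phi_cont : continuous (phi : X1 * X2 -> Y).

Lemma narrow_cvg_image (mu : probability (borelT Y) R)
    (pik : nat -> probability (borelT X1 * borelT X2)%type R)
    (pi : probability (borelT X1 * borelT X2)%type R) :
  narrow_cvg pik pi ->
  (forall N, exists2 k, (N <= k)%N &
     forall A, measurable A -> pik k (phi @^-1` A) = mu A) ->
  forall A, measurable A -> pi (phi @^-1` A) = mu A.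
Proof.
move=> nc freq.
apply: (@finite_measure_unique_continuous _ _ (distribution pi phi)).
  by apply: (@le_lt_trans _ _ 1%E); [exact: probability_le1 | exact: ltry].
move=> f fc f01; have f0 y : (0 <= (f y)%:E)%E by case/andP: (f01 y).
have mf : measurable_fun setT (fun y : borelT Y => (f y)%:E).
  by apply/measurable_EFinP; exact: continuous_borel_measurable.
rewrite ge0_integral_distribution //.
have cvg_fphi : ((fun k => \int[pik k]_x (f (phi x))%:E) @ \oo -->
                 \int[pi]_x (f (phi x))%:E)%E.
  apply: (nc (f \o phi)).
    by move=> x; apply: continuous_comp; [exact: phi_cont | exact: fc].
  by exists 1 => x; have /andP[fx0 fx1] := f01 (phi x); rewrite ger0_norm.
apply: (cvg_frequently_eq (@ereal_hausdorff R) cvg_fphi) => N.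
have [k Nk pikmu] := freq N; exists k => //.
transitivity (\int[distribution (pik k) phi]_y (f y)%:E)%E.
  by rewrite ge0_integral_distribution.
by apply: eq_measure_integral => A mA _; exact: pikmu.
Qed.

End narrow_limit_image.

Section measurable_projections.
Context {d1 d2} {T1 : measurableType d1} {T2 : measurableType d2}.

HB.instance Definition _ :=
  isMeasurableFun.Build _ _ _ _ (@fst T1 T2) measurable_fst.
HB.instance Definition _ :=
  isMeasurableFun.Build _ _ _ _ (@snd T1 T2) measurable_snd.

End measurable_projections.

Lemma narrow_cvg_coupling {R : realType} {X1 X2 : pseudoPMetricType R}
    (mu1 : probability (borelT X1) R) (mu2 : probability (borelT X2) R)
    (pik : nat -> probability (borelT X1 * borelT X2)%type R)
    (pi : probability (borelT X1 * borelT X2)%type R) :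
  narrow_cvg pik pi ->
  (forall N, exists2 k, (N <= k)%N & coupling mu1 mu2 (pik k)) ->
  coupling mu1 mu2 pi.
Proof.
move=> nc freq; split=> A mA; [rewrite setXT | rewrite setTX].
- apply: (@narrow_cvg_image _ _ _ _ [mfun of fst] _ mu1 pik pi nc _ A mA).
    by move=> x; exact: cvg_fst.
  move=> N; have [k Nk [pik1 _]] := freq N.
  by exists k => // B mB; rewrite -setXT pik1.
- apply: (@narrow_cvg_image _ _ _ _ [mfun of snd] _ mu2 pik pi nc _ A mA).
    by move=> x; exact: cvg_snd.
  move=> N; have [k Nk [_ pik2]] := freq N.
  by exists k => // B mB; rewrite -setTX pik2.
Qed.

Lemma powR_sub_ge_m1 {R : realType} (q x : R) :
  1 <= q -> 0 <= x -> -1 <= x `^ q - x.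
Proof.
move=> q1 x0; have [x1|x1] := leP x 1; first by have := powR_ge0 x q; lra.
suff : x `^ 1 <= x `^ q by rewrite powRr1 //; lra.
by apply: ler_powR => //; exact: ltW.
Qed.

Local Open Scope ereal_scope.

Lemma npos_lbound_le_integral {R : realType} {d} {T : measurableType d}
    (nu : {measure set T -> \bar R}) (g : T -> R) (a : R) :
  measurable_fun setT g -> (a <= 0)%R -> (forall x, a <= g x)%R ->
  a%:E * nu setT <= \int[nu]_x (g x)%:E.
Proof.
move=> mg a0 ag; rewrite integralE.
have neg_le : \int[nu]_x ((fun x => (g x)%:E)^\- x) <= (- a)%:E * nu setT.
  rewrite -integral_cst //; apply: ge0_le_integral => //.
  - by apply: measurable_funeneg; exact/measurable_EFinP.
  - move=> x _; rewrite funenegE /= ge_max !lee_fin oppr_ge0 a0 andbT.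
    by rewrite lerN2.
have -> : a%:E * nu setT = 0 - (- a)%:E * nu setT.
  by rewrite EFinN mulNe oppeK add0e.
by apply: leeB => //; exact: integral_ge0.
Qed.

Lemma tsallis_ge {R : realType} {d} {T : measurableType d} (q : R)
    (mu : set T -> \bar R) (nu : {measure set T -> \bar R}) : (1 < q)%R ->
  (- (q - 1)^-1)%:E * nu setT <= tsallis q mu nu.
Proof.
move=> q1; apply: le_ereal_inf_tmp => _ [f [mf [f0 _]] <-].
have q1_gt0 : (0 < (q - 1)^-1)%R by rewrite invr_gt0 subr_gt0.
rewrite -[(- _^-1)%R]mulrN1 EFinM -muleA lee_pmul2l //.
apply: npos_lbound_le_integral => //.
- apply: measurable_funB => //; exact: measurableT_comp (measurable_powR q) mf.
- by move=> x; apply: powR_sub_ge_m1 => //; exact: ltW.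
Qed.

Lemma cvg_le_limn_einf {R : realType} (u v : (\bar R)^nat) (l : \bar R) :
  u @ \oo --> l -> (forall n, u n <= v n) -> l <= limn_einf v.
Proof.
move=> ul uv; rewrite limn_einf_lim -(cvg_lim _ (cvg_einfs ul)) //.
apply: lee_lim; [exact: is_cvg_einfs | exact: is_cvg_einfs | apply: nearW => n].
apply: le_ereal_inf_tmp => _ [k nk <-]; apply: le_trans (uv k).
by apply: ereal_inf_lbound; exists k.
Qed.

Lemma integral_truncation_cvg {R : realType} {d} {T : measurableType d}
    (mu : {measure set T -> \bar R}) {f : T -> R} :
  measurable_fun setT f -> (forall x, 0 <= f x)%R ->
  \int[mu]_x (Num.min (f x) n%:R)%:E @[n --> \oo] --> \int[mu]_x (f x)%:E.
Proof.
move=> mf f0.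
have fn_ge0 n x : (0 <= Num.min (f x) n%:R)%R by rewrite le_min f0 ler0n.
have fn_nd x : nondecreasing_seq (fun n => (Num.min (f x) n%:R)%:E).
  by move=> m n mn; rewrite lee_fin le_min !ge_min lexx ler_nat mn orbT.
have fn_cvg x : (Num.min (f x) n%:R)%:E @[n --> \oo] --> (f x)%:E.
  apply: cvg_near_cst; near=> n; congr (_%:E); apply: min_l.
  apply/ltW/(lt_le_trans (truncnS_gt _)); rewrite ler_nat.
  by near: n; exact: nbhs_infty_ge.
have -> : (fun x => (f x)%:E) =
          fun x => limn (fun n => (Num.min (f x) n%:R)%:E).
  by apply/funext => x; rewrite (cvg_lim _ (fn_cvg x)).
apply: cvg_monotone_convergence => [//|n|n x _|x _].
- by apply/measurable_EFinP; exact: measurable_minr.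
- by rewrite lee_fin.
- exact: fn_nd.
Unshelve. all: by end_near.
Qed.

Lemma F_eps_ge {R : realType} {X1 X2 : ptopologicalType} {q eps : R}
    (c : X1 * X2 -> R) (mu1 : probability (borelT X1) R)
    (mu2 : probability (borelT X2) R)
    (pi : probability (borelT X1 * borelT X2)%type R) :
  (1 < q)%R -> (0 <= eps)%R ->
  \int[pi]_x (c x)%:E - (eps / (q - 1))%:E <= F_eps q eps c mu1 mu2 pi.
Proof.
move=> q1 eps0; rewrite /F_eps; case: pselect => [?|?]; last exact: leey.
apply: leeD2l; rewrite -EFinN -mulrN EFinM.
apply: lee_wpmul2l; first by rewrite lee_fin.
have := tsallis_ge q pi (mu1 \x mu2) q1; set nuT := (X in _ * X <= _).
have -> : nuT = 1; last by rewrite mule1.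
transitivity (mu1 setT * mu2 setT); last by rewrite !probability_setT mule1.
by rewrite /nuT -setXTT; exact: product_measure1E.
Qed.

Section F_eps_liminf.
Context {R : realType} {X1 X2 : pseudoPMetricType R} {q : R} {eps : nat -> R}.
Context {c : X1 * X2 -> R}.
Context {mu1 : probability (borelT X1) R} {mu2 : probability (borelT X2) R}.
Context {pik : nat -> probability (borelT X1 * borelT X2)%type R}.
Variable pi : probability (borelT X1 * borelT X2)%type R.
Hypothesis nc : narrow_cvg pik pi.

Lemma limn_einf_F_eps_not_coupling : ~ coupling mu1 mu2 pi ->
  limn_einf (fun k => F_eps q (eps k) c mu1 mu2 (pik k)) = +oo.
Proof.
move=> ncpl.
have [N Nncpl] : exists N, forall k, (N <= k)%N -> ~ coupling mu1 mu2 (pik k).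
  apply: contrapT => nev; apply/ncpl/(narrow_cvg_coupling _ _ _ _ nc) => N.
  apply: contrapT => nfreq; apply: nev; exists N => k Nk cpl.
  by apply: nfreq; exists k.
suff /cvg_limn_einf_sup[] :
  F_eps q (eps k) c mu1 mu2 (pik k) @[k --> \oo] --> +oo by [].
apply: cvg_near_cst; near=> k; rewrite /F_eps; case: pselect => // cpl.
by case: (Nncpl k) => //; near: k; exact: nbhs_infty_ge.
Unshelve. all: by end_near.
Qed.

Hypotheses (sX1 : separable_space X1) (sX2 : separable_space X2).
Hypotheses (c_cont : continuous c) (q1 : (1 < q)%R).
Hypotheses (eps_ge0 : forall k, (0 <= eps k)%R) (eps_cvg : eps @ \oo --> 0%R).

Lemma bounded_minorant_le_limn_einf_F_eps (g : X1 * X2 -> R) (M : R) :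
  continuous g -> (forall x, 0 <= g x <= c x)%R -> (forall x, g x <= M)%R ->
  \int[pi]_x (g x)%:E <= limn_einf (fun k => F_eps q (eps k) c mu1 mu2 (pik k)).
Proof.
move=> g_cont gc gM.
have g0 x : (0 <= g x)%R by case/andP: (gc x).
apply: (@cvg_le_limn_einf _
  (fun k => \int[pik k]_x (g x)%:E - (eps k / (q - 1))%:E)).
  rewrite -[X in _ --> X]sube0; apply: cvgeB; first exact: fin_num_adde_defl.
    by apply: nc => //; exists M => x; rewrite ger0_norm.
  apply: cvg_EFin; first exact: nearW.
  by rewrite -(mul0r ((q - 1)^-1)%R); exact: cvgMr_tmp.
move=> k; apply: le_trans (F_eps_ge c mu1 mu2 (pik k) q1 (eps_ge0 k)).
have mg := continuous_prod_measurable sX1 sX2 g_cont.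
have mc := continuous_prod_measurable sX1 sX2 c_cont.
apply: leeB => //; apply: ge0_le_integral => //.
- by move=> x _; rewrite lee_fin.
- exact/measurable_EFinP.
- exact/measurable_EFinP.
- by move=> x _; rewrite lee_fin; case/andP: (gc x).
Qed.

End F_eps_liminf.

Local Close Scope ereal_scope.

Theorem proposition3p1 (R : realType) (p : R)
    (X1 X2 : completePseudoMetricType R)
    (c : X1 * X2 -> R) (mu1 : probability (borelT X1) R)
    (mu2 : probability (borelT X2) R) (q : R) (eps : nat -> R)
    (pik : nat -> probability (borelT X1 * borelT X2)%type R)
    (pi : probability (borelT X1 * borelT X2)%type R) :
  1 <= p -> polish X1 -> polish X2 ->
  continuous c -> (forall x, 0 <= c x) ->
  finite_moment p mu1 -> finite_moment p mu2 ->
  1 < q ->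
  (forall k, 0 < eps k) -> eps @ \oo --> 0 ->
  (forall k, finite_moment2 p (pik k)) -> finite_moment2 p pi ->
  narrow_cvg pik pi ->
  (F_lim c mu1 mu2 pi <= limn_einf (fun k => F_eps q (eps k) c mu1 mu2 (pik k)))%E.
Proof.
move=> _ [_ sX1] [_ sX2] c_cont c0 _ _ q1 eps_gt0 eps_cvg _ _ nc.
rewrite /F_lim; case: pselect => [?|ncpl]; last first.
  by rewrite (limn_einf_F_eps_not_coupling pi nc ncpl).
have mc := continuous_prod_measurable sX1 sX2 c_cont.
apply: (cvge_to_le (integral_truncation_cvg pi mc c0)); apply: nearW => M.
have eps_ge0 k : 0 <= eps k by exact: ltW.
apply: (bounded_minorant_le_limn_einf_F_eps pi nc sX1 sX2 c_cont q1 eps_ge0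
  eps_cvg _ M%:R).
- by move=> x; exact: continuous_min (c_cont x) (cvg_cst _).
- by move=> x; rewrite le_min c0 ler0n ge_min lexx.
- by move=> x; rewrite ge_min lexx orbT.
Qed.
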